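(* Let $\mathcal{H}=\mathbb{C}^{d_1}\otimes\cdots\otimes\mathbb{C}^{d_N}$ with all $d_i\ge2$ and $G=SL(d_1,\mathbb{C})\times\cdots\times SL(d_N,\mathbb{C})$ acting on $\mathcal{H}$ by $g_1\otimes\cdots\otimes g_N$. For every semistable vector $|\Psi\rangle\in\mathcal{H}$ one has $$\overline{[\,G|\Psi\rangle\,]}\setminus[\,\overline{G|\Psi\rangle}\,]\subset[\mathcal{N}\setminus\{0\}],$$ where the first closure is taken in $\mathbb{P}(\mathcal{H})$ and the second in $\mathcal{H}$.
   Context: For a set $X\subset\mathcal{H}$, $[X]$ denotes the set of classes $[x]\in\mathbb{P}(\mathcal{H})$ of its nonzero elements. Closures are in the standard (Euclidean) topology of $\mathcal{H}$ resp. $\mathbb{P}(\mathcal{H})$. The null-cone $\mathcal{N}$ is the set of vectors $|\psi\rangle\in\mathcal{H}$ with $0\in\overline{G|\psi\rangle}$; a vector is semistable if it is not in $\mathcal{N}$. *)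

From HB Require Import structures.
From mathcomp Require Import all_boot all_order all_algebra.
From mathcomp Require Import reals.
From mathcomp.real_closed Require Import complex.
Set Implicit Arguments. Unset Strict Implicit. Unset Printing Implicit Defensive.
Import Order.TTheory GRing.Theory Num.Theory.
Local Open Scope ring_scope.
Local Open Scope complex_scope.

Section Defs.
Variable R : realType.
Variable N : nat.
Variable d : 'I_N -> nat.

(* multi-indices (i_1,...,i_N), i_k < d_k : basis of C^{d_1} (x) ... (x) C^{d_N} *)
Definition midx := {dffun forall k : 'I_N, 'I_(d k)}.
(* vectors of H, in coordinates w.r.t. the product basis *)
Definition vec := midx -> R[i].

Definition vzero : vec := fun _ => 0.
Definition vscale (c : R[i]) (v : vec) : vec := fun j => c * v j.

Definition vnorm (v : vec) : R := Num.sqrt (\sum_(j : midx) (ComplexField.Normc.normc (v j)) ^+ 2).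
Definition vdist (v w : vec) : R := vnorm (fun j => v j - w j).

Definition grp_elt := forall k : 'I_N, 'M[R[i]]_(d k).
Definition inG (g : grp_elt) : Prop := forall k, \det (g k) = 1.

(* action of g_1 (x) ... (x) g_N *)
Definition act (g : grp_elt) (v : vec) : vec :=
  fun i => \sum_(j : midx) (\prod_(k : 'I_N) g k (i k) (j k)) * v j.

Definition Gorbit (v : vec) : vec -> Prop :=
  fun w => exists g, inG g /\ w = act g v.

Definition closureH (S : vec -> Prop) : vec -> Prop :=
  fun x => forall eps : R, 0 < eps -> exists y, S y /\ vdist x y < eps.

Definition openH (O : vec -> Prop) : Prop :=
  forall x, O x -> exists2 eps : R, 0 < eps & forall y, vdist x y < eps -> O y.

Definition nullcone (v : vec) : Prop := closureH (Gorbit v) vzero.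
Definition semistable (v : vec) : Prop := ~ nullcone v.

(* same class in P(H): [x] = [y] for nonzero x, y *)
Definition proj_eq (x y : vec) : Prop := exists2 c : R[i], c != 0 & y = vscale c x.

(* [x] lies in the closure of [S] in P(H), with P(H) carrying the quotient
   topology of H \ {0}: every open subset of P(H) containing [x] meets [S],
   i.e. every open, C^*-stable O subset of H\{0} containing x contains a
   nonzero element of S. *)
Definition in_closureP (S : vec -> Prop) (x : vec) : Prop :=
  forall O : vec -> Prop,
    openH O -> (forall y, O y -> y <> vzero) ->
    (forall y c, O y -> c != 0 -> O (vscale c y)) ->
    O x -> exists y, S y /\ y <> vzero /\ O y.
End Defs.

From HB Require Import structures.
From mathcomp Require Import all_boot all_order all_algebra.
From mathcomp Require Import sesquilinear spectral.
From mathcomp Require Import boolp classical_sets reals.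
From mathcomp.real_closed Require Import complex.
From mathcomp Require Import lra ring.
Set Implicit Arguments. Unset Strict Implicit. Unset Printing Implicit Defensive.
Import Order.TTheory GRing.Theory Num.Theory ComplexField.Normc.
Local Open Scope ring_scope.

(* Write x as a limit of c g Psi with g in G. Semistability bounds |c| from
   above; if |c| stayed away from 0, compactness of an annulus in C would put a
   nonzero multiple of x in the closure of G Psi, so the c can be taken to tend
   to 0. A Cartan decomposition W g = t V (W, V with entries of modulus at most
   1, t in the diagonal torus) turns c g Psi ~ x into c t (V Psi) ~ W x: the
   torus weights of t are large on every coordinate where W x is not small.
   There are finitely many such sets of coordinates, so a single mu > 0 bounds
   from below all weights of suitable torus witnesses, and a high power of the
   inverse witness shrinks W x as much as wanted: x lies in the null cone. *)

Section ComplexModulus.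
Variable R : rcfType.
Implicit Types z w : R[i].

Lemma normc_ge0 z : 0 <= normc z.
Proof. by case: z => a b; rewrite /= sqrtr_ge0. Qed.

Lemma normc_gt0 z : (0 < normc z) = (z != 0).
Proof.
rewrite lt_def normc_ge0 andbT; congr negb.
by apply/eqP/eqP => [/eq0_normc | ->]; rewrite ?normc0.
Qed.

Lemma normcB z w : normc (z - w) <= normc z + normc w.
Proof. by rewrite -(normcN w) le_normcD. Qed.

Lemma normc_distC z w : normc (z - w) = normc (w - z).
Proof. by rewrite -normcN opprB. Qed.

Lemma normcX z n : normc (z ^+ n) = normc z ^+ n.
Proof. by elim: n => [|n IHn]; rewrite ?normc1 // !exprS normcM IHn. Qed.

Lemma normc_sum (I : finType) (F : I -> R[i]) : normc (\sum_i F i) <= \sum_i normc (F i).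
Proof.
elim/big_rec2: _ => [|i y1 y2 _ IH]; first by rewrite normc0.
by apply: le_trans (le_normcD _ _) _; rewrite lerD2l.
Qed.

Lemma normc_prod (I : finType) (F : I -> R[i]) : normc (\prod_i F i) = \prod_i normc (F i).
Proof. by elim/big_rec2: _ => [|i y1 y2 _ IH]; rewrite ?normc1 // normcM IH. Qed.

Lemma normc_sqr z : normc z ^+ 2 = complex.Re z ^+ 2 + complex.Im z ^+ 2.
Proof. by case: z => a b /=; rewrite sqr_sqrtr // addr_ge0 // sqr_ge0. Qed.

Lemma Re_le_normc z : `|complex.Re z| <= normc z.
Proof.
rewrite -(ler_pXn2r (_ : (0 < 2)%N)) ?nnegrE ?normc_ge0 //.
by rewrite normc_sqr real_normK ?num_real // lerDl sqr_ge0.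
Qed.

Lemma Im_le_normc z : `|complex.Im z| <= normc z.
Proof.
rewrite -(ler_pXn2r (_ : (0 < 2)%N)) ?nnegrE ?normc_ge0 //.
by rewrite normc_sqr real_normK ?num_real // lerDr sqr_ge0.
Qed.

Lemma normc_le_ReIm z : normc z <= `|complex.Re z| + `|complex.Im z|.
Proof.
rewrite -(ler_pXn2r (_ : (0 < 2)%N)) ?nnegrE ?normc_ge0 ?addr_ge0 //.
rewrite normc_sqr sqrrD !real_normK ?num_real // -addrA lerD2l lerDr.
by rewrite mulrn_wge0 // mulr_ge0.
Qed.

Lemma normc_le1 z : `|z| <= 1 -> normc z <= 1.
Proof. by case: z => a b; rewrite normc_def -lecR. Qed.

End ComplexModulus.

Section L1Norm.
Variables (R : realType) (N : nat) (d : 'I_N -> nat).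
Implicit Types v w : vec R d.

Definition norm1 v : R := \sum_(j : midx d) normc (v j).

Lemma norm1_ge0 v : 0 <= norm1 v.
Proof. by apply: sumr_ge0 => j _; apply: normc_ge0. Qed.

Lemma normc_le_norm1 v j : normc (v j) <= norm1 v.
Proof. by rewrite /norm1 (bigD1 j) //= lerDl sumr_ge0 // => i _; apply: normc_ge0. Qed.

Lemma vnorm_le_norm1 v : vnorm v <= norm1 v.
Proof.
rewrite /vnorm -(ler_pXn2r (_ : (0 < 2)%N)) ?nnegrE ?sqrtr_ge0 ?norm1_ge0 //.
rewrite sqr_sqrtr ?sumr_ge0 // => [|j _]; last exact: sqr_ge0.
rewrite expr2 {2}/norm1 mulr_sumr; apply: ler_sum => j _.
by rewrite expr2 ler_wpM2r ?normc_ge0 ?normc_le_norm1.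
Qed.

Lemma normc_le_vnorm v j : normc (v j) <= vnorm v.
Proof.
rewrite /vnorm -(ler_pXn2r (_ : (0 < 2)%N)) ?nnegrE ?sqrtr_ge0 ?normc_ge0 //.
rewrite sqr_sqrtr ?sumr_ge0 // => [|i _]; last exact: sqr_ge0.
by rewrite (bigD1 j) //= lerDl sumr_ge0 // => i _; apply: sqr_ge0.
Qed.

Lemma eq_norm1 v w : v =1 w -> norm1 v = norm1 w.
Proof. by move=> vw; apply: eq_bigr => j _; rewrite vw. Qed.

Lemma norm1D v w : norm1 (fun j => v j + w j) <= norm1 v + norm1 w.
Proof. by rewrite /norm1 -big_split /=; apply: ler_sum => j _; apply: le_normcD. Qed.

Lemma norm1Z (c : R[i]) v : norm1 (fun j => c * v j) = normc c * norm1 v.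
Proof. by rewrite /norm1 mulr_sumr; apply: eq_bigr => j _; rewrite normcM. Qed.

Lemma norm1_le_card v (e : R) :
  (forall j, normc (v j) <= e) -> norm1 v <= #|midx d|%:R * e.
Proof. by move=> ve; rewrite mulr_natl -sumr_const; apply: ler_sum => j _. Qed.

Lemma exists_coord_neq0 v : v <> @vzero R N d -> exists j, v j != 0.
Proof.
move=> v_neq0; apply: contrapT => /forallNP v0; apply: v_neq0.
by apply: funext => j; apply/eqP/negPn/negP/v0.
Qed.

Lemma norm1_sub_invZ (c : R[i]) v w : c != 0 ->
  norm1 (fun j => c^-1 * v j - w j) = normc c^-1 * norm1 (fun j => c * w j - v j).
Proof.
by move=> c0; rewrite -norm1Z; apply: eq_bigr => j _; rewrite -normcN opprB mulrBr mulKf.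
Qed.

Lemma approx_scale_bound (c : R[i]) v w (e : R) :
  (forall j, normc (c * w j - v j) <= e) ->
  normc c * norm1 w <= norm1 v + #|midx d|%:R * e.
Proof.
move=> close; rewrite -norm1Z addrC.
rewrite (eq_norm1 (w := fun j => (c * w j - v j) + v j)) => [|j]; last by rewrite subrK.
by apply: le_trans (norm1D _ _) _; rewrite lerD2r norm1_le_card.
Qed.

Lemma vnorm0_le_norm1 v : vdist (@vzero R N d) v <= norm1 v.
Proof.
apply: le_trans (vnorm_le_norm1 _) _.
by rewrite /norm1; under eq_bigr do rewrite sub0r normcN.
Qed.

End L1Norm.

Section Action.
Variables (R : realType) (N : nat) (d : 'I_N -> nat).
Implicit Types (v w : vec R d) (g h : grp_elt R d).

Lemma prod_sum_dffun (T : comPzSemiRingType) (F : forall k : 'I_N, 'I_(d k) -> T) :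
  \prod_(k : 'I_N) \sum_(a : 'I_(d k)) F k a =
  \sum_(j : midx d) \prod_(k : 'I_N) F k (j k).
Proof.
pose P k := [ffun a : 'I_(d k) => F k a].
have PF k : \sum_(a : 'I_(d k)) F k a = \sum_(a : 'I_(d k)) P k a.
  by apply: eq_bigr => a _; rewrite ffunE.
under eq_bigr do rewrite PF (big_tag P).
rewrite bigA_distr_big_dep -big_fprod.
rewrite (reindex (@fprod_of_dffun _ (fun k => 'I_(d k)))); last first.
  by exists (@dffun_of_fprod _ (fun k => 'I_(d k))) => x _;
    [apply: fprod_of_dffunK | apply: dffun_of_fprodK].
by apply: eq_bigr => j _; apply: eq_bigr => k _; rewrite fprodE ffunE.
Qed.

Definition gmul g h : grp_elt R d := fun k => g k *m h k.

Lemma act_mul g h v : act g (act h v) = act (gmul g h) v.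
Proof.
apply: funext => i; rewrite /act.
under eq_bigr do rewrite mulr_sumr.
rewrite exchange_big /=; apply: eq_bigr => l _.
under eq_bigr do rewrite mulrA.
rewrite -mulr_suml; congr (_ * _).
under [RHS]eq_bigr do rewrite mxE.
by rewrite prod_sum_dffun; apply: eq_bigr => j _; rewrite -big_split.
Qed.

Lemma actB g v w : act g (fun j => v j - w j) = (fun i => act g v i - act g w i).
Proof.
by apply: funext => i; rewrite /act -sumrB; apply: eq_bigr => j _; rewrite mulrBr.
Qed.

Lemma actZ g (c : R[i]) v : act g (fun j => c * v j) = (fun i => c * act g v i).
Proof.
by apply: funext => i; rewrite /act mulr_sumr; apply: eq_bigr => j _; rewrite mulrCA.
Qed.

Definition diag_grp (t : forall k : 'I_N, 'I_(d k) -> R[i]) : grp_elt R d :=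
  fun k => diag_mx (\row_(a < d k) t k a).

Definition weight (t : forall k : 'I_N, 'I_(d k) -> R[i]) (j : midx d) : R[i] :=
  \prod_(k : 'I_N) t k (j k).

Lemma act_diag_mul t g v i : act (gmul (diag_grp t) g) v i = weight t i * act g v i.
Proof.
rewrite /act mulr_sumr; apply: eq_bigr => j _.
rewrite mulrA -big_split /=; congr (_ * _).
by apply: eq_bigr => k _; rewrite /gmul /diag_grp mul_diag_mx !mxE.
Qed.

Definition entries_le1 g := forall k a b, normc (g k a b) <= 1.

Lemma normc_act_le g v i : entries_le1 g -> normc (act g v i) <= norm1 v.
Proof.
move=> g1; apply: le_trans (normc_sum _) _; apply: ler_sum => j _.
rewrite normcM normc_prod ler_piMl ?normc_ge0 //.
by apply: prodr_ile1 => k _; rewrite normc_ge0 g1.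
Qed.

End Action.

Section CartanDecomposition.
Variable C : numClosedFieldType.
Local Open Scope sesquilinear_scope.

Lemma unitarymx_entry_le1 n (U : 'M[C]_n) i j : U \is unitarymx -> `|U i j| <= 1.
Proof.
move=> /unitarymxP UU; rewrite -(ler_pXn2r (_ : (0 < 2)%N)) ?nnegrE ?expr1n //.
have /matrixP/(_ i i) := UU; rewrite !mxE eqxx mulr1n => rowU.
rewrite -rowU (bigD1 j) //= !mxE -normCK lerDl sumr_ge0 // => a _.
by rewrite !mxE -normCK exprn_ge0.
Qed.

Lemma orthogonal_cols_polar n (B : 'M[C]_n) (lam : 'rV[C]_n) :
  (forall i, 0 < lam 0 i) -> B^t* *m B = diag_mx lam ->
  exists2 U : 'M[C]_n, U \is unitarymx & B = U *m diag_mx (\row_i sqrtC (lam 0 i)).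
Proof.
move=> lam_gt0 BB.
have sqrt_neq0 i : sqrtC (lam 0 i) != 0 by rewrite sqrtC_eq0 gt_eqF.
pose si := \row_i (sqrtC (lam 0 i))^-1.
exists (B *m diag_mx si); last first.
  rewrite -mulmxA mulmx_diag -[LHS]mulmx1 -diag_const_mx; congr (_ *m diag_mx _).
  by apply/rowP => i; rewrite !mxE mulVf.
have siJ : (diag_mx si)^t* = diag_mx si.
  rewrite tr_diag_mx; apply/matrixP => a b; rewrite !mxE.
  by case: eqP => _; rewrite ?mulr1n ?mulr0n ?conjC0 ?geC0_conj ?invr_ge0 ?sqrtC_ge0 ?ltW.
apply/unitarymxP/mulmx1C.
rewrite trmx_mul map_mxM siJ mulmxA -(mulmxA _ (B^t*)) BB.
rewrite !mulmx_diag -diag_const_mx; congr diag_mx; apply/rowP => i; rewrite !mxE.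
by rewrite mulrAC -expr2 exprVn sqrtCK mulVf ?gt_eqF.
Qed.

Lemma unitmx_svd n (g : 'M[C]_n) : g \in unitmx ->
  exists (U V : 'M[C]_n) (s : 'rV[C]_n),
    [/\ U \is unitarymx, V \is unitarymx & g = U *m diag_mx s *m V].
Proof.
move=> g_unit.
have gg_normal : g^t* *m g \is normalmx.
  by apply/normalmxP; rewrite trmx_mul map_mxM trmxCK.
have /orthomx_spectralP := gg_normal.
set P := spectralmx _; set lam := spectral_diag _ => ggE.
have P_unitary : P \is unitarymx := spectral_unitarymx _.
rewrite invmx_unitary // in ggE.
set B := g *m P^t*.
have BB : B^t* *m B = diag_mx lam.
  rewrite /B trmx_mul map_mxM trmxCK !mulmxA -(mulmxA P) ggE !mulmxA.
  by rewrite (unitarymxP P_unitary) mul1mx mulmxtVK.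
have lam_ge0 i : 0 <= lam 0 i.
  have /matrixP/(_ i i) := BB; rewrite [in RHS]mxE eqxx mulr1n => <-.
  by rewrite mxE sumr_ge0 // => a _; rewrite !mxE -normCKC exprn_ge0.
have lam_neq0 i : lam 0 i != 0.
  have B_unit : B \in unitmx by rewrite unitmx_mul g_unit unitarymx_unit ?trmxC_unitary.
  have : \det (B^t* *m B) != 0.
    by rewrite det_mulmx det_map_mx det_tr mulf_neq0 ?conjC_eq0 -?unitfE -?unitmxE.
  by rewrite BB det_diag (bigD1 i) //= mulf_eq0 negb_or => /andP[].
have [U U_unitary BE] : exists2 U : 'M[C]_n, U \is unitarymx &
    B = U *m diag_mx (\row_i sqrtC (lam 0 i)).
  by apply: orthogonal_cols_polar => // i; rewrite lt_def lam_neq0 lam_ge0.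
exists U, P, (\row_i sqrtC (lam 0 i)); split => //.
by rewrite -BE /B -mulmxA -invmx_unitary // mulVmx ?mulmx1 // unitarymx_unit.
Qed.

Lemma unitarymx_rescale_det1 n (U : 'M[C]_n) : (0 < n)%N -> U \is unitarymx ->
  exists r : C, [/\ r != 0, r *: U \is unitarymx & \det (r *: U) = 1].
Proof.
move=> n_gt0 U_unitary.
have normdetU : `|\det U| = 1.
  have : \det (U *m U^t*) = 1 by rewrite (unitarymxP U_unitary) det1.
  rewrite det_mulmx det_map_mx det_tr -normCK => /eqP.
  by rewrite pexpr_eq1 // => /eqP.
have detU_neq0 : \det U != 0 by rewrite -normr_eq0 normdetU oner_neq0.
set r := n.-root (\det U)^-1.
have normr1 : `|r| = 1 by rewrite norm_rootC normfV normdetU invr1 rootC1.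
exists r; split; first by rewrite -normr_eq0 normr1 oner_neq0.
  apply/unitarymxP; rewrite linearZ /= map_mxZ -scalemxAl -scalemxAr.
  by rewrite (unitarymxP U_unitary) scalerA -normCK normr1 expr1n scale1r.
by rewrite detZ rootCK // mulVf.
Qed.

Lemma SL_cartan n (g : 'M[C]_n) : (0 < n)%N -> \det g = 1 ->
  exists (W V : 'M[C]_n) (s : 'rV[C]_n),
    [/\ forall i j, `|W i j| <= 1, forall i j, `|V i j| <= 1,
        \det W = 1, \prod_i s 0 i = 1 & W *m g = diag_mx s *m V].
Proof.
move=> n_gt0 detg.
have g_unit : g \in unitmx by rewrite unitmxE detg unitr1.
have [U [V [s [U_unitary V_unitary gE]]]] := unitmx_svd g_unit.
have Ut_unitary : U^t* \is unitarymx by rewrite trmxC_unitary.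
have [r [r_neq0 W_unitary detW]] := unitarymx_rescale_det1 n_gt0 Ut_unitary.
have [r' [r'_neq0 V'_unitary detV']] := unitarymx_rescale_det1 n_gt0 V_unitary.
have WgE : r *: U^t* *m g = diag_mx ((r / r') *: s) *m (r' *: V).
  have UU : U^t* *m U = 1%:M by apply/mulmx1C/unitarymxP.
  rewrite gE !mulmxA -!scalemxAl UU mul1mx linearZ [diag_mx (_ *: _)]linearZ /=.
  by rewrite -scalemxAl scalerA mulrC divfK.
exists (r *: U^t*), (r' *: V), ((r / r') *: s); split => //.
- by move=> i j; apply: unitarymx_entry_le1.
- by move=> i j; apply: unitarymx_entry_le1.
- by move/(congr1 determinant): WgE; rewrite !det_mulmx detW detg detV' det_diag !mulr1.
Qed.

End CartanDecomposition.

Section UniformRadius.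
Variable R : realType.

Definition shrinkable (T : Type) (P : T -> R -> Prop) :=
  forall t r r', P t r -> 0 < r' -> r' <= r -> P t r'.

Lemma fin_uniform_radius (I : finType) (P : I -> R -> Prop) : shrinkable P ->
  (forall i, exists2 r, 0 < r & P i r) -> exists2 r, 0 < r & forall i, P i r.
Proof.
move=> Pshrink Ploc.
suff [r r_gt0 Pr] : exists2 r, 0 < r & forall i, i \in enum I -> P i r.
  by exists r => // i; apply: Pr; rewrite mem_enum.
elim: (enum I) => [|i s [r r_gt0 Pr]]; first by exists 1.
have [ri ri_gt0 Pri] := Ploc i.
have min_gt0 : 0 < Num.min r ri by rewrite lt_min r_gt0 ri_gt0.
exists (Num.min r ri) => // j; rewrite inE => /orP[/eqP-> | js].
  by apply: Pshrink Pri min_gt0 _; rewrite ge_min lexx orbT.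
by apply: Pshrink (Pr j js) min_gt0 _; rewrite ge_min lexx.
Qed.

(* Heine-Borel on [-K, K]: the supremum of the points up to which a uniform
   radius exists cannot stop before K. *)
Lemma segment_uniform_radius (K : R) (P : R -> R -> Prop) : shrinkable P ->
  (forall t, `|t| <= K -> exists2 r, 0 < r &
     forall s, `|s| <= K -> `|s - t| < r -> P s r) ->
  exists2 r, 0 < r & forall s, `|s| <= K -> P s r.
Proof.
move=> Pshrink Ploc.
have [K_lt0 | K_ge0] := ltP K 0.
  by exists 1 => // s; have := normr_ge0 s; lra.
pose S t := -K <= t <= K /\
  exists2 r, 0 < r & forall s, -K <= s <= t -> P s r.
have S_K : S (-K).
  split; first by apply/andP; lra.
  have [r r_gt0 Pr] := Ploc (-K) (ltac:(by rewrite normrN ger0_norm)).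
  exists r => // s /andP[s1 s2]; have -> : s = -K by lra.
  by apply: Pr; rewrite ?normrN ?ger0_norm ?subrr ?normr0.
have S_sup : has_sup S by split; [exists (-K) | exists K => t [/andP[]]].
set sig := sup S.
have sig_ub := sup_upper_bound S_sup.
have sig_le : sig <= K by apply: ge_sup; [exists (-K) | move=> t [/andP[]]].
have sig_ge : -K <= sig by apply: sig_ub.
have [rs rs_gt0 Prs] := Ploc sig (ltac:(by rewrite ler_norml; apply/andP; lra)).
have [t [/andP[t1 t2] [rt rt_gt0 Prt]] sig_t] := sup_adherent rs_gt0 S_sup.
set rho := Num.min rt rs.
have rho_gt0 : 0 < rho by rewrite lt_min rt_gt0 rs_gt0.
have Prho s : -K <= s <= K -> s < sig + rs -> P s rho.
  move=> /andP[s1 s2] s3; have [st | ts] := leP s t.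
    by apply: Pshrink (Prt s _) rho_gt0 _; rewrite ?s1 ?ge_min ?lexx.
  apply: Pshrink (Prs s _ _) rho_gt0 _; rewrite ?ge_min ?lexx ?orbT //.
    by rewrite ler_norml; apply/andP; lra.
  by rewrite ltr_norml; apply/andP; move: sig_t; rewrite -/sig; lra.
have K_lt : K < sig + rs / 2.
  rewrite ltNge; apply/negP => le_K.
  have : S (sig + rs / 2).
    split; first by apply/andP; lra.
    by exists rho => // s /andP[s1 s2]; apply: Prho; [apply/andP|]; lra.
  by move/sig_ub; rewrite -/sig; lra.
by exists rho => // s; rewrite ler_norml => /andP[s1 s2]; apply: Prho; [apply/andP|]; lra.
Qed.

Lemma bounded_uniform_radius (K : R) (A : R[i] -> Prop) (Q : R[i] -> R -> Prop) :
  shrinkable Q -> (forall u, A u -> normc u <= K) ->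
  (forall u, exists2 r, 0 < r & forall v, A v -> normc (v - u) < r -> Q v r) ->
  exists2 r, 0 < r & forall u, A u -> Q u r.
Proof.
move=> Qshrink A_bounded Qloc.
have ReK (v : R[i]) : A v -> `|complex.Re v| <= K.
  by move=> Av; apply: le_trans (Re_le_normc v) (A_bounded v Av).
have ImK (v : R[i]) : A v -> `|complex.Im v| <= K.
  by move=> Av; apply: le_trans (Im_le_normc v) (A_bounded v Av).
have column a : exists2 r, 0 < r &
    forall v, A v -> `|complex.Re v - a| < r -> Q v r.
  pose P b r := forall v, A v ->
    `|complex.Re v - a| < r -> `|complex.Im v - b| < r -> Q v r.
  have [r r_gt0 Pr] : exists2 r, 0 < r & forall b, `|b| <= K -> P b r.
    apply: segment_uniform_radius => [b r r' Pbr r'_gt0 r'r v Av va vb | t _].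
      exact: Qshrink (Pbr v Av (lt_le_trans va r'r) (lt_le_trans vb r'r)) r'_gt0 r'r.
    have [r r_gt0 Pr] := Qloc (a +i* t)%C.
    exists (r / 4) => [|s _ st]; first by rewrite divr_gt0.
    move=> [p q] Av /= pa qs; apply: Qshrink (Pr _ Av _) _ _; rewrite ?divr_gt0 //.
      apply: le_lt_trans (normc_le_ReIm _) _ => /=.
      by have := ler_distD s q t; lra.
    lra.
  exists r => // v Av va; apply: (Pr (complex.Im v)); rewrite ?ImK //.
  by rewrite subrr normr0.
pose P a r := forall v, A v -> `|complex.Re v - a| < r -> Q v r.
have [r r_gt0 Pr] : exists2 r, 0 < r & forall a, `|a| <= K -> P a r.
  apply: segment_uniform_radius => [a r r' Par r'_gt0 r'r v Av va | t _].
    exact: Qshrink (Par v Av (lt_le_trans va r'r)) r'_gt0 r'r.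
  have [r r_gt0 Pr] := column t.
  exists (r / 2) => [|s _ st v Av vs]; first by rewrite divr_gt0.
  apply: Qshrink (Pr v Av _) _ _; rewrite ?divr_gt0 //; last lra.
  by have := ler_distD s (complex.Re v) t; lra.
exists r => // u Au; apply: (Pr (complex.Re u)); rewrite ?ReK //.
by rewrite subrr normr0.
Qed.

End UniformRadius.

Section Torus.
Variables (R : realType) (N : nat) (d : 'I_N -> nat).
Implicit Types t : forall k : 'I_N, 'I_(d k) -> R[i].

Definition torus t := forall k, \prod_(a : 'I_(d k)) t k a = 1.

Definition expandable (B : {set midx d}) :=
  exists2 t, torus t & forall j, j \in B -> 2 <= normc (weight t j).

Lemma torus_weight_neq0 t j : torus t -> weight t j != 0.
Proof.
move=> tt; apply/prodf_neq0 => k _; apply: contra_eq_neq (tt k) => tk0.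
by rewrite (bigD1 (j k)) //= tk0 mul0r eq_sym oner_neq0.
Qed.

(* Finitely many sets B, finitely many weights: one lower bound serves all. *)
Lemma expandable_uniform_witness : exists2 mu : R, 0 < mu &
  forall B, expandable B -> exists t, [/\ torus t,
    forall j, j \in B -> 2 <= normc (weight t j) & forall j, mu <= normc (weight t j)].
Proof.
apply: fin_uniform_radius => [B mu mu' Pmu _ mu'mu /Pmu [t [tt tB tmu]] | B].
  by exists t; split => // j; apply: le_trans mu'mu (tmu j).
have [[t tt tB] | B_not] := EM (expandable B); last by exists 1 => // /B_not.
have [mu mu_gt0 tmu] : exists2 mu : R, 0 < mu & forall j, mu <= normc (weight t j).
  apply: fin_uniform_radius => [j r r' tr _ r'r | j]; first exact: le_trans r'r tr.
  by exists (normc (weight t j)); rewrite ?normc_gt0 ?torus_weight_neq0.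
by exists mu => // _; exists t.
Qed.

Lemma grp_cartan (d_gt0 : forall k, (0 < d k)%N) (g : grp_elt R d) : inG g ->
  exists (W V : grp_elt R d) t, [/\ entries_le1 W, entries_le1 V, inG W, torus t
    & gmul W g = gmul (diag_grp t) V].
Proof.
move=> Gg.
have Hk k : exists p : 'M[R[i]]_(d k) * 'M[R[i]]_(d k) * 'rV[R[i]]_(d k),
   [/\ forall a b, `|p.1.1 a b| <= 1, forall a b, `|p.1.2 a b| <= 1,
       \det p.1.1 = 1, \prod_a p.2 0 a = 1 & p.1.1 *m g k = diag_mx p.2 *m p.1.2].
  by have [W [V [s []]]] := SL_cartan (d_gt0 k) (Gg k); exists (W, V, s).
pose p k := sval (cid (Hk k)).
have pP k : _ := svalP (cid (Hk k)).
exists (fun k => (p k).1.1), (fun k => (p k).1.2), (fun k a => (p k).2 0 a).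
split=> [k a b | k a b | k | k |].
- by apply: normc_le1; case: (pP k).
- by apply: normc_le1; case: (pP k).
- by case: (pP k).
- by case: (pP k).
apply: functional_extensionality_dep => k; rewrite /gmul /diag_grp.
case: (pP k) => _ _ _ _ ->.
by congr (diag_mx _ *m _); apply/rowP => a; rewrite mxE.
Qed.

End Torus.

Section ProjectiveApproximation.
Variables (R : realType) (N : nat) (d : 'I_N -> nat).
Implicit Types (x y : vec R d) (S : vec R d -> Prop).

(* Preimage in H of a neighbourhood of [x] in P(H). *)
Definition proj_ball x (delta : R) y :=
  exists c : R[i], forall j, normc (c * y j - x j) < delta.

Lemma proj_ball_open x delta : openH (proj_ball x delta).
Proof.
move=> y [c yc].
pose P j e := normc (c * y j - x j) + e < delta.
have [e e_gt0 Pe] : exists2 e, 0 < e & forall j, P j e.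
  apply: fin_uniform_radius => [j e e' Pje _ e'e | j]; first by move: Pje; rewrite /P; lra.
  by exists ((delta - normc (c * y j - x j)) / 2); have := yc j; rewrite /P; lra.
have c1_gt0 : 0 < normc c + 1 by have := normc_ge0 c; lra.
exists (e / (normc c + 1)) => [|y' yy']; first exact: divr_gt0.
exists c => j; have := Pe j; rewrite /P => Pj.
have close : normc (y j - y' j) * (normc c + 1) <= e.
  by rewrite -ler_pdivlMr // ltW // (le_lt_trans (normc_le_vnorm _ j) yy').
have -> : c * y' j - x j = (c * y j - x j) - c * (y j - y' j) by ring.
apply: le_lt_trans (normcB _ _) _; rewrite normcM.
by have := normc_ge0 (y j - y' j); nra.
Qed.

Lemma proj_closure_approx S x j0 delta : in_closureP S x ->
  0 < delta -> delta <= normc (x j0) -> exists2 y, S y & proj_ball x delta y.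
Proof.
move=> Sx delta_gt0 delta_le.
have [|||| y [Sy [_ xy]]] := Sx (proj_ball x delta); last by exists y.
- exact: proj_ball_open.
- move=> y [c yc] y0; have := yc j0.
  by rewrite y0 /vzero mulr0 sub0r normcN; lra.
- by move=> y c [c' yc'] c0; exists (c' / c) => j; rewrite /vscale mulrA divfK.
- by exists 1 => j; rewrite mul1r subrr normc0.
Qed.

Lemma norm1_gap S x u : ~ closureH S (vscale u x) ->
  exists2 eps, 0 < eps & forall y, S y -> eps <= norm1 (fun j => u * x j - y j).
Proof.
move=> notcl; apply: contrapT => nogap; apply: notcl => eps eps_gt0.
apply: contrapT => far; apply: nogap; exists eps => // y Sy.
rewrite leNgt; apply/negP => close; apply: far; exists y; split => //.
exact: le_lt_trans (vnorm_le_norm1 _) close.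
Qed.

Lemma norm1_scale_lipschitz x y u u' :
  norm1 (fun j => u * x j - y j) <=
  norm1 (fun j => u' * x j - y j) + normc (u - u') * norm1 x.
Proof.
rewrite -norm1Z (eq_norm1 (w := fun j => (u' * x j - y j) + (u - u') * x j)).
  exact: norm1D.
by move=> j; ring.
Qed.

Lemma annulus_gap S x (a b : R) : 0 < a ->
  (forall u, a <= normc u <= b -> ~ closureH S (vscale u x)) ->
  exists2 r, 0 < r & forall u, a <= normc u <= b ->
    forall y, S y -> r <= norm1 (fun j => u * x j - y j).
Proof.
move=> a_gt0 notcl.
apply: (bounded_uniform_radius (K := b) (A := fun u => a <= normc u <= b)).
- by move=> u r r' Pur _ r'r y Sy; apply: le_trans r'r (Pur y Sy).
- by move=> u /andP[].
move=> u; have [u_lt | a_le] := ltP (normc u) a.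
  exists (a - normc u) => [|v /andP[av _]]; first lra.
  by have := le_normcD u (v - u); rewrite addrC subrK; lra.
have [b_lt | u_le] := ltP b (normc u).
  exists (normc u - b) => [|v /andP[_ vb]]; first lra.
  by have := le_normcD v (u - v); rewrite addrC subrK normc_distC; lra.
have [eps eps_gt0 gap] := norm1_gap (notcl u (ltac:(by apply/andP))).
have X_ge0 := norm1_ge0 x.
pose r := eps / (2 * (norm1 x + 1)).
have r_gt0 : 0 < r by rewrite divr_gt0 //; lra.
have epsE : r * (2 * (norm1 x + 1)) = eps by rewrite /r divfK // gt_eqF //; lra.
exists r => // v _ uv y Sy.
have := norm1_scale_lipschitz x y u v; have := gap y Sy.
have : normc (u - v) * norm1 x <= r * norm1 x.
  by rewrite ler_wpM2r // ltW // normc_distC.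
nra.
Qed.

End ProjectiveApproximation.

Section VanishingScalars.
Variables (R : realType) (N : nat) (d : 'I_N -> nat).
Implicit Types (x Psi : vec R d).

Lemma semistable_norm1_bound Psi : semistable Psi ->
  exists2 m : R, 0 < m & forall g, inG g -> m <= norm1 (act g Psi).
Proof.
move=> ss; apply: contrapT => nobound; apply: ss => eps eps_gt0.
apply: contrapT => far; apply: nobound; exists eps => // g Gg.
rewrite leNgt; apply/negP => small; apply: far.
exists (act g Psi); split; first by exists g.
exact: le_lt_trans (vnorm0_le_norm1 _) small.
Qed.

Lemma gap_forces_large_scalar x y (c : R[i]) (a eta r delta : R) :
  0 < eta -> 0 < delta -> delta * (#|midx d|%:R + 1) <= r * eta ->
  (forall j, normc (c * y j - x j) < delta) ->
  (a <= normc c^-1 <= eta^-1 -> r <= norm1 (fun j => c^-1 * x j - y j)) ->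
  eta <= normc c -> normc c^-1 < a.
Proof.
move=> eta_gt0 delta_gt0 delta_r close gap eta_le_c.
have c_gt0 : 0 < normc c := lt_le_trans eta_gt0 eta_le_c.
have c1_le : normc c^-1 <= eta^-1 by rewrite normcV lef_pV2 ?posrE.
rewrite ltNge; apply/negP => a_le.
have := gap (ltac:(by apply/andP)); rewrite norm1_sub_invZ -?normc_gt0 // => r_le.
have : r <= eta^-1 * (#|midx d|%:R * delta).
  apply: le_trans r_le _; apply: ler_pM; rewrite ?normc_ge0 ?norm1_ge0 //.
  by apply: norm1_le_card => j; apply: ltW.
by rewrite mulrC ler_pdivlMr //; lra.
Qed.

(* If |c| stayed >= eta, semistability would also bound |c| from above, so
   c^-1 would range in a compact annulus, on which c^-1 x stays uniformly away
   from the orbit. *)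
Lemma vanishing_scalar_approx Psi x : semistable Psi -> x <> @vzero R N d ->
  in_closureP (Gorbit Psi) x ->
  (forall u, u != 0 -> ~ closureH (Gorbit Psi) (vscale u x)) ->
  forall eta : R, 0 < eta -> exists2 g, inG g &
    exists2 c : R[i], normc c < eta & forall j, normc (c * act g Psi j - x j) < eta.
Proof.
move=> ss x_neq0 x_cl notcl eta eta_gt0.
have [j0 xj0] := exists_coord_neq0 x_neq0.
set X := norm1 x; set M : R := #|midx d|%:R.
have X_ge0 : 0 <= X := norm1_ge0 x.
have M_ge0 : 0 <= M := ler0n _ _.
have [m m_gt0 orbit_ge] := semistable_norm1_bound ss.
have K_gt0 : 0 < (X + M) / m + 1 by rewrite ltr_pwDr // divr_ge0 ?addr_ge0 // ltW.
pose a := ((X + M) / m + 1)^-1.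
have a_gt0 : 0 < a by rewrite invr_gt0.
have [r r_gt0 gap] : exists2 r, 0 < r & forall u, a <= normc u <= eta^-1 ->
    forall y, Gorbit Psi y -> r <= norm1 (fun j => u * x j - y j).
  apply: annulus_gap => // u /andP[au _]; apply: notcl.
  by rewrite -normc_gt0 (lt_le_trans a_gt0).
pose delta := Num.min (Num.min 1 eta) (Num.min (normc (x j0)) (r * eta / (M + 1))).
have delta_gt0 : 0 < delta.
  rewrite !lt_min ltr01 eta_gt0 normc_gt0 xj0 /=.
  by rewrite divr_gt0 ?mulr_gt0 //; lra.
have [delta_le1 delta_le_eta] : delta <= 1 /\ delta <= eta.
  by rewrite !ge_min !lexx !orbT.
have delta_le_x : delta <= normc (x j0) by rewrite !ge_min lexx !orbT.
have delta_le_r : delta * (M + 1) <= r * eta.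
  by rewrite -ler_pdivlMr ?ltr_pwDr // !ge_min lexx !orbT.
have [_ [g [Gg ->]] [c xc]] := proj_closure_approx x_cl delta_gt0 delta_le_x.
exists g => //; exists c => [|j]; last exact: lt_le_trans (xc j) delta_le_eta.
rewrite ltNge; apply/negP => eta_le_c.
have c_gt0 : 0 < normc c := lt_le_trans eta_gt0 eta_le_c.
have c_le : normc c * m <= X + M.
  have := approx_scale_bound (fun j => ltW (xc j)).
  have := ler_wpM2l (normc_ge0 c) (orbit_ge g Gg).
  by have := ler_wpM2l M_ge0 delta_le1; rewrite -/X -/M; lra.
have := gap_forces_large_scalar eta_gt0 delta_gt0 delta_le_r xc
  (fun c1_in => gap _ c1_in _ (ex_intro _ g (conj Gg erefl))) eta_le_c.
apply/negP; rewrite -leNgt normcV lef_pV2 ?posrE //.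
by rewrite ler_wpDr // ler_pdivlMr.
Qed.

End VanishingScalars.

Section NullCone.
Variables (R : realType) (N : nat) (d : 'I_N -> nat).
Implicit Types (t : forall k : 'I_N, 'I_(d k) -> R[i]) (x z w Psi : vec R d).

Lemma torus_invX t m : torus t -> torus (fun k a => (t k a ^+ m)^-1).
Proof. by move=> tt k; rewrite prodfV prodrXl tt expr1n invr1. Qed.

Lemma weight_invX t m j : weight (fun k a => (t k a ^+ m)^-1) j = (weight t j ^+ m)^-1.
Proof. by rewrite /weight prodfV prodrXl. Qed.

Lemma inG_diag_mul t (W : grp_elt R d) : torus t -> inG W -> inG (gmul (diag_grp t) W).
Proof.
move=> tt GW k; rewrite det_mulmx GW mulr1 det_diag -[RHS](tt k).
by apply: eq_bigr => a _; rewrite mxE.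
Qed.

Lemma expandable_large_coords t (c : R[i]) w z (eta e P : R) :
  torus t -> normc c < eta -> (forall j, normc (w j) <= P) ->
  (forall j, normc (c * (weight t j * w j) - z j) <= e) ->
  expandable R [set j | e + 2 * eta * (P + 1) <= normc (z j)].
Proof.
move=> tt c_lt wP close; exists t => // j; rewrite inE => zj.
rewrite leNgt; apply/negP => small.
have eta_gt0 : 0 < eta := le_lt_trans (normc_ge0 c) c_lt.
have P_ge0 : 0 <= P := le_trans (normc_ge0 _) (wP j).
have : normc (c * (weight t j * w j)) <= eta * (2 * P).
  have ww := ler_pM (normc_ge0 _) (normc_ge0 _) (ltW small) (wP j).
  rewrite !normcM; have := normc_ge0 c; nra.
have := normcB (c * (weight t j * w j)) (c * (weight t j * w j) - z j).
rewrite opprB addrC subrK; have := close j; nra.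
Qed.

Lemma torus_invX_shrinks t z (X theta mu : R) m :
  0 <= theta -> 0 < mu -> (forall j, normc (z j) <= X) ->
  (forall j, theta <= normc (z j) -> 2 <= normc (weight t j)) ->
  (forall j, mu <= normc (weight t j)) ->
  forall j, normc ((weight t j ^+ m)^-1 * z j) <= X / 2 ^+ m + theta / mu ^+ m.
Proof.
move=> theta_ge0 mu_gt0 zX big_w mu_w j.
have X_ge0 : 0 <= X := le_trans (normc_ge0 _) (zX j).
have w_gt0 : 0 < normc (weight t j) := lt_le_trans mu_gt0 (mu_w j).
rewrite normcM normcV normcX.
have theta_mu_ge0 : 0 <= theta / mu ^+ m by rewrite divr_ge0 // exprn_ge0 // ltW.
have X2_ge0 : 0 <= X / 2 ^+ m by rewrite divr_ge0 // exprn_ge0.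
have [theta_le | z_lt] := leP theta (normc (z j)).
  have : (normc (weight t j) ^+ m)^-1 <= (2 ^+ m)^-1.
    by rewrite lef_pV2 ?posrE ?exprn_gt0 // lerXn2r ?nnegrE ?normc_ge0 ?big_w.
  move/ler_pM/(_ (zX j)); rewrite invr_ge0 exprn_ge0 ?normc_ge0 // => /(_ isT isT).
  by rewrite [X / _]mulrC; lra.
have : (normc (weight t j) ^+ m)^-1 <= (mu ^+ m)^-1.
  by rewrite lef_pV2 ?posrE ?exprn_gt0 // lerXn2r ?nnegrE ?normc_ge0 ?mu_w // ltW.
move/ler_pM/(_ (ltW z_lt)); rewrite invr_ge0 exprn_ge0 ?normc_ge0 // => /(_ isT isT).
by rewrite [theta / _]mulrC; lra.
Qed.

Lemma cartan_expandable (d_gt0 : forall k, (0 < d k)%N) Psi x g (c : R[i]) (eta : R) :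
  inG g -> normc c < eta -> (forall j, normc (c * act g Psi j - x j) < eta) ->
  exists2 W : grp_elt R d, entries_le1 W /\ inG W & expandable R
    [set j | (#|midx d|%:R + 1) * eta + 2 * eta * (norm1 Psi + 1) <= normc (act W x j)].
Proof.
move=> Gg c_lt close; have eta_gt0 := le_lt_trans (normc_ge0 c) c_lt.
have [W [V [t [W1 V1 GW tt WgE]]]] := grp_cartan d_gt0 Gg.
exists W => //; apply: (expandable_large_coords tt c_lt (normc_act_le Psi ^~ V1)) => j.
have -> : c * (weight t j * act V Psi j) - act W x j =
          act W (fun i => c * act g Psi i - x i) j.
  by rewrite actB actZ act_mul WgE act_diag_mul.
apply: le_trans (normc_act_le _ _ W1) _; apply: le_trans (norm1_le_card _) _.
  by move=> i; apply: ltW (close i).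
by rewrite mulrDl mul1r; lra.
Qed.

Lemma nullcone_of_vanishing_approx (d_gt0 : forall k, (0 < d k)%N) (Psi x : vec R d) :
  (forall eta : R, 0 < eta -> exists2 g, inG g &
    exists2 c : R[i], normc c < eta & forall j, normc (c * act g Psi j - x j) < eta) ->
  nullcone x.
Proof.
move=> approx eps eps_gt0.
(* Choose mu (uniform torus bound), then m making X / 2^m small, then theta
   making theta / mu^m small, and finally eta. *)
set X := norm1 x; set P := norm1 Psi; set M : R := #|midx d|%:R.
have [X_ge0 P_ge0 M_ge0] : [/\ 0 <= X, 0 <= P & 0 <= M].
  by rewrite !norm1_ge0 ler0n.
have [mu mu_gt0 witness] := expandable_uniform_witness R d.
have [m m_large] : exists m, 2 * (M + 1) * X / eps < 2 ^+ m.
  by exists (Num.bound (2 * (M + 1) * X / eps)); apply: upper_nthrootP.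
pose theta := eps * mu ^+ m / (4 * (M + 1)).
have theta_gt0 : 0 < theta by rewrite divr_gt0 ?mulr_gt0 ?exprn_gt0 //; lra.
pose eta := theta / (M + 1 + 2 * (P + 1)).
have eta_gt0 : 0 < eta by rewrite divr_gt0 //; lra.
have thetaE : (M + 1) * eta + 2 * eta * (P + 1) = theta.
  by rewrite /eta; field; rewrite gt_eqF //; lra.
have [g Gg [c c_lt close]] := approx eta eta_gt0.
have [W [W1 GW] /witness [s [ss sB smu]]] := cartan_expandable d_gt0 Gg c_lt close.
pose s' k a := (s k a ^+ m)^-1.
exists (act (gmul (diag_grp s') W) x); split.
  exists (gmul (diag_grp s') W); split => //.
  by apply: inG_diag_mul => //; apply: torus_invX.
apply: le_lt_trans (vnorm0_le_norm1 (act (gmul (diag_grp s') W) x)) _.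
have shrink j : normc (act (gmul (diag_grp s') W) x j) <= X / 2 ^+ m + theta / mu ^+ m.
  rewrite act_diag_mul weight_invX.
  apply: (torus_invX_shrinks m (ltW theta_gt0) mu_gt0 (normc_act_le x ^~ W1) _ smu).
  by move=> i zi; apply: sB; rewrite inE thetaE.
apply: le_lt_trans (norm1_le_card shrink) _.
have theta_part : (M + 1) * (theta / mu ^+ m) = eps / 4.
  by rewrite /theta; field; rewrite !gt_eqF ?exprn_gt0 //; lra.
have two_m_gt0 : 0 < (2 : R) ^+ m by rewrite exprn_gt0.
have X_part : (M + 1) * (X / 2 ^+ m) < eps / 2.
  by move: m_large; rewrite mulrA !ltr_pdivrMr //; set T := 2 ^+ m; lra.
have : 0 <= X / 2 ^+ m + theta / mu ^+ m.
  have mu_m_gt0 : 0 < mu ^+ m by rewrite exprn_gt0.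
  by rewrite addr_ge0 // divr_ge0 // ltW.
move: X_part theta_part; set T2 := X / 2 ^+ m; set Tmu := theta / mu ^+ m; nra.
Qed.

End NullCone.

Theorem mainTheorem2 (R : realType) (N : nat) (d : 'I_N -> nat)
  (hd : forall k, (2 <= d k)%N) (Psi : vec R d) :
  semistable Psi ->
  forall x : vec R d, x <> @vzero R N d ->
    (* [x] in closure (in P(H)) of [G Psi] *)
    in_closureP (Gorbit Psi) x ->
    (* [x] not in [closure (in H) of G Psi] *)
    ~ (exists y, y <> @vzero R N d /\ closureH (Gorbit Psi) y /\ proj_eq x y) ->
    (* [x] in [N \ {0}] *)
    exists y, y <> @vzero R N d /\ nullcone y /\ proj_eq x y.
Proof.
move=> ss x x_neq0 x_cl x_notcl.
have d_gt0 k : (0 < d k)%N by apply: leq_trans (hd k).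
have multiples_notcl u : u != 0 -> ~ closureH (Gorbit Psi) (vscale u x).
  move=> u_neq0 ux_cl; apply: x_notcl; exists (vscale u x).
  split; last by split=> //; exists u.
  move=> ux0; apply: x_neq0; apply: funext => j.
  by have := congr1 (fun v => u^-1 * v j) ux0; rewrite /vscale /vzero mulr0 mulKf.
exists x; split=> //; split.
  apply: (nullcone_of_vanishing_approx d_gt0) => eta eta_gt0.
  exact: (vanishing_scalar_approx ss x_neq0 x_cl multiples_notcl eta_gt0).
by exists 1; rewrite ?oner_neq0 //; apply: funext => j; rewrite /vscale mul1r.
Qed.
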